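(* Let $q\ge2$ be an integer, $[q]=\{0,\dots,q-1\}$, and let $X_{\mathrm{rep}}=\{(\dots,a,a,a,\dots): a\in[q]\}\subseteq[q]^{\mathbb{Z}}$ be the $q$-ary repetition system. Let $\mu^{\mathsf{u}}$ be the uniform Bernoulli i.i.d. measure on $[q]^{\mathbb{Z}}$. Then \[R_0(X_{\mathrm{rep}},[q]^{\mathbb{Z}},\mu^{\mathsf{u}})=R(X_{\mathrm{rep}},[q]^{\mathbb{Z}})=1-\frac1q.\]
   Context: For a shift space $X\subseteq\Sigma^{\mathbb{Z}}$, $\mathscr{B}_n(X)$ is the set of length-$n$ words appearing as consecutive subwords of elements of $X$ (so $\mathscr{B}_n([q]^{\mathbb{Z}})=[q]^n$). $d$ is the Hamming distance and $B_r(\overline{x})$ the Hamming ball of radius $r$. For $A,C\subseteq\Sigma^n$: $R(C,A)=\max_{\overline{y}\in A}\min_{\overline{x}\in C}d(\overline{x},\overline{y})$, and for a probability measure $\eta$ on $\Sigma^n$ and $\varepsilon>0$, $R_\varepsilon(C,A,\eta)=\min\{r\in\mathbb{Z}_{\ge0}:\eta(A\cap\bigcup_{\overline{x}\in C}B_r(\overline{x}))\ge1-\varepsilon\}$. For shift spaces $X,Y$: $R(X,Y)=\liminf_n\frac1nR(\mathscr{B}_n(X),\mathscr{B}_n(Y))$. For a shift-invariant ergodic probability measure $\mu$ on $Y$, with $\mu_n$ its marginal on coordinates $0,\dots,n-1$: $R_\varepsilon(X,Y,\mu)=\liminf_n\frac1nR_\varepsilon(\mathscr{B}_n(X),\mathscr{B}_n(Y),\mu_n)$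 and the essential covering radius is $R_0(X,Y,\mu)=\lim_{\varepsilon\to0}R_\varepsilon(X,Y,\mu)$. *)

From HB Require Import structures.
From mathcomp Require Import all_boot all_order all_algebra.
From mathcomp Require Import all_classical all_reals all_analysis.
Set Implicit Arguments. Unset Strict Implicit. Unset Printing Implicit Defensive.
Import Order.TTheory GRing.Theory Num.Theory.
Local Open Scope ring_scope.

(* Alphabet [q] = 'I_q; configurations of [q]^Z are functions int -> 'I_q;
   words of length n are finite functions 'I_n -> 'I_q. *)
Definition config (q : nat) := int -> 'I_q.
Definition word (q n : nat) := {ffun 'I_n -> 'I_q}.

Definition hamming (q n : nat) (x y : word q n) : nat := #|[set i | x i != y i]|.

Definition lang (q n : nat) (X : set (config q)) : {set word q n} :=
  [set w : word q n | `[< exists x, X x /\ exists i : int,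
                            forall k : 'I_n, w k = x (i + (k : nat)%:Z) >] ].

Definition full_shift (q : nat) : set (config q) := setT.
Definition rep_system (q : nat) : set (config q) :=
  [set x | exists a : 'I_q, forall i, x i = a].

(* R(C,A) = max_{y in A} min_{x in C} d(x,y)  (min over empty C defaults to n) *)
Definition cov_radius (q n : nat) (C A : {set word q n}) : nat :=
  \max_(y in A) \big[minn/n]_(x in C) hamming x y.

Definition near_set (q n : nat) (C : {set word q n}) (r : nat) (y : word q n) : bool :=
  [exists x in C, (hamming x y <= r)%N].

(* R_eps(C,A,eta) = min{ r >= 0 : eta(A ∩ ∪_{x∈C} B_r(x)) >= 1 - eps };
   for eps > 0 and a probability vector eta, r = n always qualifies (when C is
   nonempty), so the minimum can be taken over r <= n (default n). *)
Definition ess_cov_radius (R : realType) (q n : nat) (C A : {set word q n})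
    (eta : word q n -> R) (eps : R) : nat :=
  \big[minn/n]_(r < n.+1 |
      (1 - eps <= \sum_(y in A | near_set C r y) eta y)) (r : nat).

Definition shift_cov_radius (R : realType) (q : nat) (X Y : set (config q)) : R :=
  limn_inf (fun n => (cov_radius (lang n X) (lang n Y))%:R / n%:R).

(* R_eps(X,Y,mu) = liminf_n R_eps(B_n X, B_n Y, mu_n)/n, with mu given by
   its family of marginals mu_n on coordinates 0..n-1 *)
Definition shift_ess_cov_radius (R : realType) (q : nat) (X Y : set (config q))
    (mu : forall n, word q n -> R) (eps : R) : R :=
  limn_inf (fun n => (ess_cov_radius (lang n X) (lang n Y) (mu n) eps)%:R / n%:R).

(* marginals of the uniform Bernoulli i.i.d. measure on [q]^Z:
   mu_n(w) = q^{-n} for every word w of length n *)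
Definition uniform_marginal (R : realType) (q n : nat) (w : word q n) : R :=
  (q%:R ^+ n)^-1.

Arguments rep_system q : clear implicits.
Arguments full_shift q : clear implicits.

(* Every word of length n has a symbol occurring at least n/q times, hence lies within
   Hamming distance (1 - 1/q) n of a constant word; this bounds R from above, and
   R_eps <= R.  Conversely, if N_a(y) counts the occurrences of a in y, the total
   squared deviation D(y) = sum_a (N_a(y) - n/q)^2 has uniform mean n (1 - 1/q),
   while every word within distance (1 - 1/q - d) n of a constant word has
   D(y) >= (d n)^2.  By Markov's inequality these words have mass at most
   1/(d^2 n), so for large n no radius below (1 - 1/q - d) n captures mass 1 - eps. *)
Set Implicit Arguments. Unset Strict Implicit.
From HB Require Import structures.
From mathcomp Require Import all_boot all_order all_algebra.
From mathcomp Require Import all_classical all_reals all_analysis.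
From mathcomp Require Import zify ring lra.
Import Order.TTheory GRing.Theory Num.Theory.
Local Open Scope ring_scope.

Lemma card_set_sum_bool (X : finType) (P : pred X) : #|[set x | P x]| = (\sum_x P x)%N.
Proof. by rewrite -sum1dep_card big_mkcond. Qed.

Lemma markov_sum (R : numFieldType) (I : finType) (P : pred I) (w g : I -> R) (K : R) :
  0 < K -> (forall i, 0 <= w i) -> (forall i, 0 <= g i) -> (forall i, P i -> K <= g i) ->
  \sum_(i | P i) w i <= (\sum_i w i * g i) / K.
Proof.
move=> K_gt0 w_ge0 g_ge0 PK; rewrite ler_pdivlMr // mulr_suml.
apply: le_trans (_ : \sum_(i | P i) w i * g i <= _).
  by apply: ler_sum => i Pi; rewrite ler_wpM2l // PK.
rewrite [X in _ <= X](bigID P) /= lerDl; apply: sumr_ge0 => i _.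
exact: mulr_ge0.
Qed.

Section FinfunOccurrences.
Variables (I T : finType).
Implicit Types (f : {ffun I -> T}) (a : T).

Definition occ f a : nat := #|[set i | f i == a]|.

Lemma card_ffun_fixed_on (S : {set I}) (g : I -> T) :
  #|[set f : {ffun I -> T} | [forall i in S, f i == g i]]| = (#|T| ^ #|~: S|)%N.
Proof.
pose F i : pred T := if i \in S then pred1 (g i) else predT.
have -> : #|[set f : {ffun I -> T} | [forall i in S, f i == g i]]| = #|family F|.
  apply: eq_card => f; rewrite !inE; apply/forall_inP/familyP => [fS i | fF i iS].
    by rewrite /F; case: ifP => // /fS.
  by have := fF i; rewrite /F iS.
rewrite card_family foldrE big_map big_enum /= -prod_nat_const.
rewrite [RHS]big_mkcond /=; apply: eq_bigr => i _.
by rewrite /F inE; case: (i \in S); rewrite ?card1 ?cardT ?size_enum_ord.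
Qed.

Lemma card_ffun_eq_coords (i j : I) : i != j ->
  (#|T| * #|[set f : {ffun I -> T} | f i == f j]| = #|T| ^ #|I|)%N.
Proof.
move=> ij.
have fiber a : #|[set f : {ffun I -> T} | (f i == f j) && (f i == a)]| =
               (#|T| ^ #|~: [set i; j]|)%N.
  rewrite -(card_ffun_fixed_on _ (fun=> a)); apply: eq_card => f; rewrite !inE.
  apply/andP/forall_inP => [[/eqP fij fia] k | fa].
    by rewrite !inE => /orP[] /eqP->; rewrite -?fij.
  have fi : f i = a by apply/eqP/fa; rewrite !inE eqxx.
  have fj : f j = a by apply/eqP/fa; rewrite !inE eqxx orbT.
  by rewrite fi fj eqxx.
rewrite -sum1_card (partition_big (fun f => f i) predT) //=.
rewrite (eq_bigr (fun=> #|T| ^ #|~: [set i; j]|)%N) => [|a _].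
  by rewrite sum_nat_const mulnA mulnn -expnD -(cardsC [set i; j]) cards2 ij.
by rewrite sum1_card -(fiber a); apply: eq_card => f; rewrite -topredE /= !inE.
Qed.

Lemma occE f a : occ f a = (\sum_i (f i == a))%N.
Proof. exact: card_set_sum_bool. Qed.

Lemma sum_occ f : (\sum_a occ f a)%N = #|I|.
Proof.
under eq_bigr do rewrite occE.
rewrite exchange_big /= -sum1_card; apply: eq_bigr => i _.
by rewrite (bigD1 (f i)) //= eqxx big1 // => a /negPf; rewrite eq_sym => ->.
Qed.

Lemma exists_frequent_value f : (0 < #|T|)%N -> exists a, (#|I| <= #|T| * occ f a)%N.
Proof.
case/card_gt0P => a0 _.
have [a _ amax] := @arg_maxnP _ a0 xpredT (occ f) isT.
exists a; rewrite -(sum_occ f) -sum_nat_const.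
by apply: leq_sum => b _; apply: amax.
Qed.

Lemma sum_occ_sqr f : (\sum_a occ f a ^ 2 = \sum_i \sum_j (f i == f j))%N.
Proof.
under eq_bigr do rewrite occE expnS expn1 big_distrlr /=.
rewrite exchange_big; apply: eq_bigr => i _.
rewrite exchange_big; apply: eq_bigr => j _ /=.
rewrite (bigD1 (f i)) //= eqxx mul1n eq_sym big1 ?addn0 // => a /negPf fia.
by rewrite [f i == a]eq_sym fia.
Qed.

Lemma second_moment_occ :
  (#|T| * \sum_f \sum_a occ f a ^ 2 = #|T| ^ #|I| * (#|I| * (#|T| + #|I|.-1)))%N.
Proof.
under eq_bigr do rewrite sum_occ_sqr.
rewrite exchange_big /=; under eq_bigr do rewrite exchange_big /=.
rewrite big_distrr mulnCA -sum_nat_const /=; apply: eq_bigr => i _.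
rewrite big_distrr (bigD1 i) //= (eq_bigr (fun=> 1%N)) => [|f _]; last by rewrite eqxx.
rewrite sum1_card card_ffun (eq_bigr (fun=> #|T| ^ #|I|)%N) => [|j ji]; last first.
  by rewrite -(card_set_sum_bool (fun f => f i == f j)) card_ffun_eq_coords // eq_sym.
by rewrite sum_nat_const cardC1 -mulnDl mulnC.
Qed.

Lemma sum_sqr_dev_occ (R : numFieldType) : (0 < #|T|)%N ->
  \sum_f \sum_a ((occ f a)%:R - #|I|%:R / #|T|%:R) ^+ 2
    = #|T|%:R ^+ #|I| * (#|I|%:R * (1 - #|T|%:R^-1)) :> R.
Proof.
move=> T_gt0.
have offdiag : #|I|%:R * (#|I|.-1)%:R = #|I|%:R * (#|I|%:R - 1) :> R.
  by case: #|I| => [|m]; rewrite ?mul0r // -natr1 addrK.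
have := congr1 (fun k => k%:R : R) second_moment_occ.
rewrite /= mulnDr !natrM natrX natrD !natrM offdiag natr_sum => moment.
have t_neq0 : #|T|%:R != 0 :> R by rewrite pnatr_eq0 -lt0n.
set t := #|T|%:R in t_neq0 moment *; set n := #|I|%:R in offdiag moment *.
have dev f : \sum_a ((occ f a)%:R - n / t) ^+ 2 = (\sum_a occ f a ^ 2)%:R - n ^+ 2 / t.
  under [LHS]eq_bigr do rewrite sqrrB.
  rewrite !big_split /= sumrN sumrMnl -mulr_suml -natr_sum sum_occ sumr_const.
  rewrite natr_sum; under [in RHS]eq_bigr do rewrite natrX.
  by rewrite -mulr_natr -/t -/n; field.
under eq_bigr do rewrite dev.
rewrite sumrB sumr_const card_ffun -[_ *+ (_ ^ _)]mulr_natr natrX -/t.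
have -> : \sum_f (\sum_a occ f a ^ 2)%:R = t ^+ #|I| * (n * t + n * (n - 1)) / t.
  by rewrite -moment [t * _]mulrC mulfK.
by field.
Qed.

End FinfunOccurrences.

Section CoveringRadius.
Variables (q n : nat) (C A : {set word q n}).

Lemma hamming_le (x y : word q n) : (hamming x y <= n)%N.
Proof. by rewrite /hamming -[X in (_ <= X)%N](card_ord n) max_card. Qed.

Lemma cov_radius_le : (cov_radius C A <= n)%N.
Proof. by apply/bigmax_leqP => y _; exact: (@bigmin_le_id _ nat). Qed.

Lemma near_cov_radius y : (0 < #|C|)%N -> y \in A -> near_set C (cov_radius C A) y.
Proof.
case/card_gt0P => x0 x0C yA.
have [x xC xmin] :=
  @eq_bigmin _ nat _ n x0 [in C] (fun x => hamming x y) x0C (fun x _ => hamming_le x y).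
apply/existsP; exists x; rewrite xC -xmin.
exact: (leq_bigmax_cond (F := fun y => \big[minn/n]_(x in C) hamming x y)).
Qed.

Lemma ess_cov_radius_le_cov (R : realType) (eta : word q n -> R) eps :
  (0 < #|C|)%N -> 1 - eps <= \sum_(y in A) eta y ->
  (ess_cov_radius C A eta eps <= cov_radius C A)%N.
Proof.
move=> C_gt0 mass; have cov_lt : (cov_radius C A < n.+1)%N by rewrite ltnS cov_radius_le.
apply: (@bigmin_le_cond _ nat _ _ (Ordinal cov_lt)) => /=.
rewrite (eq_bigl [in A]) // => y; case yA: (y \in A) => //=.
by rewrite near_cov_radius.
Qed.

Lemma ess_cov_radius_ge (R : realType) (eta : word q n -> R) eps (b : R) :
  b <= n%:R ->
  (forall r, r%:R < b -> \sum_(y in A | near_set C r y) eta y < 1 - eps) ->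
  b <= (ess_cov_radius C A eta eps)%:R.
Proof.
move=> bn small; apply: (big_ind (fun k : nat => b <= k%:R)) => //.
  by move=> k l bk bl; rewrite /minn; case: ltnP.
by move=> r mass; rewrite leNgt; apply/negP => /small; rewrite ltNge mass.
Qed.

End CoveringRadius.

Section RepetitionSystem.
Variable q : nat.

Definition const_word n (a : 'I_q) : word q n := [ffun=> a].

Lemma lang_rep_systemE n (w : word q n) :
  (w \in lang n (rep_system q)) = [exists a, w == const_word n a].
Proof.
rewrite inE; apply/asboolP/existsP => [[x [[a xa] [i wx]]] | [a /eqP ->]].
  by exists a; apply/eqP/ffunP => k; rewrite wx xa ffunE.
exists (fun=> a); split; first by exists a.
by exists 0%R => k; rewrite ffunE.
Qed.

Lemma lang_full_shiftT n : (0 < q)%N -> lang n (full_shift q) = [set: word q n].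
Proof.
move=> q_gt0; apply/setP => w; rewrite !inE; apply/asboolP.
exists (fun i => if insub `|i|%N is Some k then w k else Ordinal q_gt0); split => //.
by exists 0%R => k; rewrite add0r /= valK.
Qed.

Lemma occ_add_hamming_const n a (y : word q n) :
  (occ y a + hamming (const_word n a) y = n)%N.
Proof.
rewrite /hamming /occ -[RHS](card_ord n) -(cardsC [set i | y i == a]); congr (_ + _)%N.
by apply: eq_card => i; rewrite !inE ffunE eq_sym.
Qed.

Lemma near_rep_systemE n r (y : word q n) :
  near_set (lang n (rep_system q)) r y = [exists a, (n <= r + occ y a)%N].
Proof.
apply/existsP/existsP => [[x /andP[]] | [a na]].
  rewrite lang_rep_systemE => /existsP[a /eqP ->] dist; exists a.
  by have := occ_add_hamming_const a y; lia.
exists (const_word n a); rewrite lang_rep_systemE; apply/andP; split.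
  by apply/existsP; exists a.
by have := occ_add_hamming_const a y; lia.
Qed.

Lemma cov_radius_rep_system_mul_le n : (0 < q)%N ->
  (q * cov_radius (lang n (rep_system q)) (lang n (full_shift q)) <= (q - 1) * n)%N.
Proof.
move=> q_gt0; apply: (big_ind (fun m => q * m <= (q - 1) * n)%N); first by rewrite muln0.
  by move=> k l qk ql; rewrite /maxn; case: ltnP.
move=> y _; have [|a freq] := exists_frequent_value y; first by rewrite card_ord.
rewrite !card_ord in freq.
apply: leq_trans (leq_mul (leqnn q) (@bigmin_le_cond _ nat _ _ (const_word n a) _ _ _)) _.
  by rewrite lang_rep_systemE; apply/existsP; exists a.
by have := occ_add_hamming_const a y; nia.
Qed.

End RepetitionSystem.

Section LiminfBounds.
Local Open Scope classical_set_scope.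
Variable R : realType.
Implicit Types (u : R^nat) (a b c : R).

Lemma bounded_fun_ratio (x : nat -> nat) :
  (forall n, x n <= n)%N -> bounded_fun (fun n => (x n)%:R / n%:R : R).
Proof.
move=> x_le; rewrite /= /bounded_near; near=> M => n _ /=.
apply: (@le_trans _ _ 1); last by near: M; apply: nbhs_pinfty_ge.
rewrite ger0_norm ?divr_ge0 //; case: n (x_le n) => [|n] xn; first by rewrite invr0 mulr0.
by rewrite ler_pdivrMr ?ltr0n // mul1r ler_nat.
Unshelve. all: by end_near. Qed.

Lemma bounded_fun_is_cvg_infs u : bounded_fun u -> cvgn (infs u).
Proof.
move=> u_bnd; apply: nondecreasing_is_cvgn (bounded_fun_has_ubound_infs u_bnd).
exact/nondecreasing_infs/bounded_fun_has_lbound.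
Qed.

Lemma limn_inf_ge u a : bounded_fun u -> (\forall n \near \oo, a <= u n) -> a <= limn_inf u.
Proof.
move=> u_bnd [N _ a_le]; apply: limr_ge; first exact: bounded_fun_is_cvg_infs.
exists N => // n /= Nn; apply: lb_le_inf; first by exists (u n); exists n => /=.
by move=> _ [k /= nk <-]; apply: a_le; apply: leq_trans nk.
Qed.

Lemma limn_inf_le u b : bounded_fun u -> (\forall n \near \oo, u n <= b) -> limn_inf u <= b.
Proof.
move=> u_bnd le_b; apply: limr_le; first exact: bounded_fun_is_cvg_infs.
apply: filterS le_b => n; apply: le_trans.
by apply: ge_inf; [exact/has_lbound_sdrop/bounded_fun_has_lbound | exists n => /=].
Qed.

Lemma near_infty_inv_mul_lt a c : 0 < a -> 0 < c -> \forall n \near \oo, (a * n%:R)^-1 < c.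
Proof.
move=> a_gt0 c_gt0.
apply: filterS2 (nbhs_infty_gtr ((a * c)^-1)) (nbhs_infty_gt 0) => n n_large n_gt0.
rewrite invf_plt ?posrE ?mulr_gt0 ?ltr0n // -ltr_pdivrMl //.
by move: n_large; rewrite invfM mulrC.
Qed.

End LiminfBounds.

Section UniformMeasure.
Variables (R : realType) (q : nat).
Hypothesis q_ge2 : (2 <= q)%N.
Let q_gt0 : (0 < q)%N. Proof. exact: leq_trans q_ge2. Qed.
Let Q_gt0 : 0 < q%:R :> R. Proof. by rewrite ltr0n. Qed.

Notation C n := (lang n (rep_system q)).
Notation Y n := (lang n (full_shift q)).
Notation mu n := (@uniform_marginal R q n).

Lemma uniform_marginal_ge0 n (y : word q n) : 0 <= mu n y.
Proof. by rewrite /uniform_marginal invr_ge0 exprn_ge0. Qed.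

Lemma sum_uniform_marginal n : \sum_(y : word q n) mu n y = 1.
Proof.
rewrite /uniform_marginal sumr_const card_ffun !card_ord -[_^-1 *+ _]mulr_natr natrX.
by rewrite mulVf // expf_neq0 // gt_eqF.
Qed.

Lemma near_rep_system_sqr_dev_ge n r (y : word q n) (d : R) : 0 <= d ->
  r%:R <= (1 - q%:R^-1 - d) * n%:R -> near_set (C n) r y ->
  (d * n%:R) ^+ 2 <= \sum_a ((occ y a)%:R - n%:R / q%:R) ^+ 2.
Proof.
move=> d_ge0 r_small; rewrite near_rep_systemE => /existsP[a na].
have occ_large : d * n%:R <= (occ y a)%:R - n%:R / q%:R.
  have : n%:R <= r%:R + (occ y a)%:R :> R by rewrite -natrD ler_nat.
  lra.
rewrite (bigD1 a) //= -[leLHS]addr0 lerD ?sumr_ge0 // => [|b _]; last exact: sqr_ge0.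
by rewrite ler_sqr ?nnegrE ?mulr_ge0 //; apply: le_trans occ_large; rewrite mulr_ge0.
Qed.

Lemma uniform_mass_near_rep_system_le n r (d : R) : (0 < n)%N -> 0 < d ->
  r%:R <= (1 - q%:R^-1 - d) * n%:R ->
  \sum_(y in Y n | near_set (C n) r y) mu n y <= (d ^+ 2 * n%:R)^-1.
Proof.
move=> n_gt0 d_gt0 r_small.
have N_gt0 : 0 < n%:R :> R by rewrite ltr0n.
pose dev (y : word q n) : R := \sum_a ((occ y a)%:R - n%:R / q%:R) ^+ 2.
apply: le_trans (@markov_sum R _ (fun y => (y \in Y n) && near_set (C n) r y)
  _ dev ((d * n%:R) ^+ 2) _ _ _ _) _.
- by rewrite exprn_gt0 // mulr_gt0.
- exact: uniform_marginal_ge0.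
- by move=> y; apply: sumr_ge0 => a _; apply: sqr_ge0.
- by move=> y /andP[_]; apply: near_rep_system_sqr_dev_ge r_small; rewrite ltW.
rewrite /uniform_marginal -mulr_sumr /dev.
have := @sum_sqr_dev_occ 'I_n 'I_q R; rewrite !card_ord => ->; last exact: q_gt0.
rewrite mulKf ?expf_neq0 ?gt_eqF // ler_pdivrMr ?exprn_gt0 ?mulr_gt0 //.
have -> : (d ^+ 2 * n%:R)^-1 * (d * n%:R) ^+ 2 = n%:R by field; rewrite !gt_eqF.
by rewrite -[leRHS]mulr1 ler_wpM2l ?ler0n // gerBl invr_ge0.
Qed.

Lemma ess_cov_radius_rep_system_ge n eps (d : R) :
  0 < d -> (d ^+ 2 * n%:R)^-1 < 1 - eps ->
  (1 - q%:R^-1 - d) * n%:R <= (ess_cov_radius (C n) (Y n) (mu n) eps)%:R.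
Proof.
move=> d_gt0 small_inv; apply: ess_cov_radius_ge => [|r r_small].
  have q_inv_ge0 : 0 <= q%:R^-1 :> R by rewrite invr_ge0.
  by rewrite ler_piMl //; lra.
have n_gt0 : (0 < n)%N.
  by rewrite lt0n; apply: contraTneq r_small => ->; rewrite mulr0 -leNgt ler0n.
apply: le_lt_trans small_inv.
by apply: uniform_mass_near_rep_system_le => //; apply: ltW.
Qed.

Lemma ess_cov_radius_rep_system_le_cov n eps : 0 <= eps ->
  (ess_cov_radius (C n) (Y n) (mu n) eps <= cov_radius (C n) (Y n))%N.
Proof.
move=> eps_ge0; apply: ess_cov_radius_le_cov.
  apply/card_gt0P; exists (const_word n (Ordinal q_gt0)).
  by rewrite lang_rep_systemE; apply/existsP; eexists.
rewrite lang_full_shiftT // (eq_bigl xpredT) => [|y]; last by rewrite inE.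
by rewrite sum_uniform_marginal gerBl.
Qed.

Lemma cov_radius_rep_system_le n :
  (cov_radius (C n) (Y n))%:R <= (1 - q%:R^-1) * n%:R :> R.
Proof.
have := cov_radius_rep_system_mul_le n q_gt0.
rewrite -(ler_nat R) !natrM natrB 1?ltnW // => bound.
rewrite -(ler_pM2l Q_gt0).
have -> : q%:R * ((1 - q%:R^-1) * n%:R) = (q%:R - 1) * n%:R :> R by field; rewrite gt_eqF.
exact: bound.
Qed.

Lemma limn_inf_rep_system_ratio (x : nat -> nat) (eps d : R) :
  0 <= eps < 1 -> 0 < d ->
  (forall n, ess_cov_radius (C n) (Y n) (mu n) eps <= x n <= cov_radius (C n) (Y n))%N ->
  1 - q%:R^-1 - d <= limn_inf (fun n => (x n)%:R / n%:R : R) <= 1 - q%:R^-1.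
Proof.
move=> /andP[eps_ge0 eps_lt1] d_gt0 x_between.
have x_le n : (x n <= n)%N.
  by case/andP: (x_between n) => _ /leq_trans; apply; apply: cov_radius_le.
have mass_gt0 : 0 < 1 - eps by rewrite subr_gt0.
have d2_gt0 : 0 < d ^+ 2 by rewrite exprn_gt0.
apply/andP; split; [apply: limn_inf_ge | apply: limn_inf_le]; try exact: bounded_fun_ratio.
  apply: filterS2 (near_infty_inv_mul_lt d2_gt0 mass_gt0) (nbhs_infty_gt 0).
  move=> n inv_small n_gt0; rewrite ler_pdivlMr ?ltr0n //.
  apply: le_trans (ess_cov_radius_rep_system_ge d_gt0 inv_small) _.
  by rewrite ler_nat; case/andP: (x_between n).
apply: filterS (nbhs_infty_gt 0) => n n_gt0.
rewrite ler_pdivrMr ?ltr0n //; apply: le_trans (cov_radius_rep_system_le n).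
by rewrite ler_nat; case/andP: (x_between n).
Qed.

Lemma shift_ess_cov_radius_rep_system_bounds (eps d : R) : 0 <= eps < 1 -> 0 < d ->
  1 - q%:R^-1 - d
    <= shift_ess_cov_radius (rep_system q) (full_shift q) (@uniform_marginal R q) eps
    <= 1 - q%:R^-1.
Proof.
move=> eps01 d_gt0; apply: (limn_inf_rep_system_ratio eps01 d_gt0) => n.
by rewrite leqnn ess_cov_radius_rep_system_le_cov //; case/andP: eps01.
Qed.

Lemma shift_cov_radius_rep_system_bounds (d : R) : 0 < d ->
  1 - q%:R^-1 - d <= shift_cov_radius R (rep_system q) (full_shift q) <= 1 - q%:R^-1.
Proof.
move=> d_gt0; apply: (@limn_inf_rep_system_ratio _ 0 _ _ d_gt0) => [|n].
  by rewrite lexx ltr01.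
by rewrite leqnn ess_cov_radius_rep_system_le_cov.
Qed.

End UniformMeasure.

Local Open Scope classical_set_scope.

Theorem proposition17 (R : realType) (q : nat) (hq : (2 <= q)%N) :
  (@shift_ess_cov_radius R q (rep_system q) (full_shift q) (@uniform_marginal R q) eps
     @[eps --> 0%R^'+] --> (1 - q%:R^-1 : R^o))
  /\ @shift_cov_radius R q (rep_system q) (full_shift q) = 1 - q%:R^-1.
Proof.
split.
- apply/cvgrPdist_le => e e_gt0; near=> eps.
  have eps01 : 0 <= eps < 1.
    by apply/andP; split; near: eps; [apply: nbhs_right_ge | apply: nbhs_right_lt].
  have /andP[lo hi] := shift_ess_cov_radius_rep_system_bounds hq eps01 e_gt0.
  by rewrite ler_norml; apply/andP; split; lra.
- apply/le_anti/andP; split.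
    by have /andP[_ ->] := @shift_cov_radius_rep_system_bounds R q hq 1 ltr01.
  apply/ler_addgt0Pr => d d_gt0.
  by have /andP[lo _] := shift_cov_radius_rep_system_bounds hq d_gt0; lra.
Unshelve. all: by end_near.
Qed.
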